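(* Let $\mathbb F$ be an algebraically closed field and $\mathbf z=(z_1,\dots,z_n)$ indeterminates. If a polynomial map $L=(L_1,\dots,L_m):\mathbb F^n\to\mathbb F^m$ is not $(r,d)$-elusive, then there exist $p_1(\mathbf z),\dots,p_r(\mathbf z)\in\overline{\mathbb F(\mathbf z)}$ such that $L_i(\mathbf z)\in d\text{-}\mathrm{span}(p_1(\mathbf z),\dots,p_r(\mathbf z))$ for every $i=1,\dots,m$.
   Context: A polynomial map $M=(M_1,\dots,M_m)$ has degree $d$ if each $M_i$ is a polynomial of degree at most $d$. $L:\mathbb F^n\to\mathbb F^m$ is $(r,d)$-elusive if for every polynomial map $M:\mathbb F^r\to\mathbb F^m$ of degree $d$, $\mathrm{im}(L)\not\subseteq\mathrm{im}(M)$. For $p_1,\dots,p_r\in\overline{\mathbb F(\mathbf z)}$, $d\text{-}\mathrm{span}(p_1,\dots,p_r)$ is the $\mathbb F$-linear span of all products $p_1^{e_1}\cdots p_r^{e_r}$ with $e_i\in\mathbb N$, $\sum_ie_i\le d$. *)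

From HB Require Import structures.
From mathcomp Require Import all_boot all_order all_algebra.
Set Implicit Arguments. Unset Strict Implicit. Unset Printing Implicit Defensive.
Import GRing.Theory.
Local Open Scope ring_scope.

(* A polynomial in n variables over F, all of whose exponents are <= D:
   the coefficient of the monomial prod_i z_i^(e i) is c e. Every polynomial
   has such a representation for D large enough. *)
Definition mpoly (F : Type) (n D : nat) := {ffun {ffun 'I_n -> 'I_D.+1} -> F}.

Definition mdeg (n D : nat) (e : {ffun 'I_n -> 'I_D.+1}) : nat :=
  (\sum_(i < n) (e i : nat))%N.

Definition deg_le (F : nzRingType) (n D : nat) (c : mpoly F n D) (d : nat) : Prop :=
  forall e, (d < mdeg e)%N -> c e = 0.

Definition meval (F A : comNzRingType) (iota : F -> A) (n D : nat)
  (c : mpoly F n D) (x : 'I_n -> A) : A :=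
  \sum_(e : {ffun 'I_n -> 'I_D.+1}) iota (c e) * \prod_(i < n) x i ^+ (e i : nat).

Definition peval (F : comNzRingType) (n D : nat) (c : mpoly F n D) (x : 'I_n -> F) : F :=
  meval id c x.

Definition im_sub (F : comNzRingType) (n m r DL DM : nat)
  (L : 'I_m -> mpoly F n DL) (M : 'I_m -> mpoly F r DM) : Prop :=
  forall x : 'I_n -> F, exists y : 'I_r -> F, forall i, peval (M i) y = peval (L i) x.

Definition elusive (F : comNzRingType) (n m DL : nat) (L : 'I_m -> mpoly F n DL)
  (r d : nat) : Prop :=
  forall M : 'I_m -> mpoly F r d, (forall i, deg_le (M i) d) -> ~ im_sub L M.

(* x lies in d-span(p_1,...,p_r) : an F-linear combination of products
   p_1^e_1 ... p_r^e_r with e_1 + ... + e_r <= d *)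
Definition dspan (F K : comNzRingType) (iota : F -> K) (r d : nat)
  (p : 'I_r -> K) (x : K) : Prop :=
  exists c : mpoly F r d, deg_le c d /\ x = meval iota c p.

Definition alg_indep (F K : comNzRingType) (iota : F -> K) (n : nat) (z : 'I_n -> K) : Prop :=
  forall D (c : mpoly F n D), meval iota c z = 0 -> c = 0.

(* every element of K is algebraic over F(z_1,...,z_n)
   (denominators cleared: root of a nonzero polynomial with coefficients in F[z]) *)
Definition algebraic_over_Fz (F K : fieldType) (iota : F -> K) (n : nat) (z : 'I_n -> K) : Prop :=
  forall k : K, exists q : {poly K},
    [/\ q != 0, root q k & forall j : nat, exists D (c : mpoly F n D), q`_j = meval iota c z].

(* (K, iota, z) is an algebraic closure of the rational function field F(z_1..z_n):
   K algebraically closed (by its type), iota : F -> K a field embedding,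
   z algebraically independent over F, and K algebraic over F(z). *)
Definition is_alg_closure_Fz (F : fieldType) (K : closedFieldType)
  (iota : {rmorphism F -> K}) (n : nat) (z : 'I_n -> K) : Prop :=
  alg_indep iota z /\ algebraic_over_Fz iota z.

From HB Require Import structures.
From mathcomp Require Import all_boot all_order all_algebra closed_field mpoly.
From Stdlib Require Import Classical.
Set Implicit Arguments. Unset Strict Implicit. Unset Printing Implicit Defensive.
Import GRing.Theory.
Local Open Scope ring_scope.

(* If L is not (r,d)-elusive there is M : F^r -> F^m of degree
   d with im L ⊆ im M, i.e. the first-order formula with parameters in F
     phi(x) := exists y_1 .. y_r, /\_i M_i(y) = L_i(x)
   holds at every x in F^n.  We show that phi then holds, in K, at the generic
   point z; its witnesses p satisfy L_i(z) = M_i(p), so L_i(z) is in d-span(p).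
   The transfer to the generic point rests on quantifier elimination for
   algebraically closed fields (closed_field.v):
   1. the elimination procedure commutes with transporting the constants of a
      formula along any map F -> K, hence first-order formulas transfer along a
      field morphism between algebraically closed fields;
   2. the value of a quantifier-free psi(x) only depends on which of its atoms
      vanish.  Atoms vanishing at z are zero polynomials (z is algebraically
      independent), and by 1. applied to "exists x, prod of the other atoms is
      nonzero" some x0 in F^n makes exactly the same atoms vanish; so
      psi(z) = psi(x0), which is true when psi is valid on F^n. *)

Section MapFormula.
Variables (R S : Type) (f : R -> S).

Fixpoint map_term (t : GRing.term R) : GRing.term S :=
  match t with
  | GRing.Var i => GRing.Var _ i
  | GRing.Const x => GRing.Const (f x)
  | GRing.NatConst k => GRing.NatConst _ k
  | GRing.Add a b => GRing.Add (map_term a) (map_term b)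
  | GRing.Opp a => GRing.Opp (map_term a)
  | GRing.NatMul a k => GRing.NatMul (map_term a) k
  | GRing.Mul a b => GRing.Mul (map_term a) (map_term b)
  | GRing.Inv a => GRing.Inv (map_term a)
  | GRing.Exp a k => GRing.Exp (map_term a) k
  end.

Fixpoint map_form (g : GRing.formula R) : GRing.formula S :=
  match g with
  | GRing.Bool b => GRing.Bool b
  | GRing.Equal a b => GRing.Equal (map_term a) (map_term b)
  | GRing.Unit a => GRing.Unit (map_term a)
  | GRing.And a b => GRing.And (map_form a) (map_form b)
  | GRing.Or a b => GRing.Or (map_form a) (map_form b)
  | GRing.Implies a b => GRing.Implies (map_form a) (map_form b)
  | GRing.Not a => GRing.Not (map_form a)
  | GRing.Exists i a => GRing.Exists i (map_form a)
  | GRing.Forall i a => GRing.Forall i (map_form a)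
  end.

Definition map_polyF : seq (GRing.term R) -> seq (GRing.term S) := map map_term.

End MapFormula.

Lemma map_term_id (R : Type) (t : GRing.term R) : map_term idfun t = t.
Proof. by elim: t => //= [t1 -> t2 ->|t1 ->|t1 -> k|t1 -> t2 ->|t1 ->|t1 -> k]. Qed.

(* The quantifier elimination of closed_field.v is written in continuation
   passing style; we prove, procedure by procedure, that it commutes with
   map_form f for an arbitrary map f : F -> K of constants. *)
Section NaturalQE.
Variables (F K : fieldType) (f : F -> K).
Local Notation mt := (map_term f).
Local Notation mf := (map_form f).
Local Notation mp := (map_polyF f).
Import ClosedFieldQE.

Definition cps_related A B (h : A -> B)
    (x : (A -> GRing.formula F) -> GRing.formula F)
    (y : (B -> GRing.formula K) -> GRing.formula K) :=
  forall kF kK, (forall a, kK (h a) = mf (kF a)) -> y kK = mf (x kF).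

Lemma cps_related_ret A B (h : A -> B) a b :
  b = h a -> cps_related h (ret a) (ret b).
Proof. by move=> -> kF kK; apply. Qed.

Lemma cps_related_bind A B C D (h : A -> B) (h' : C -> D) x y g g' :
  cps_related h x y -> (forall a, cps_related h' (g a) (g' (h a))) ->
  cps_related h' (bind x g) (bind y g').
Proof. by move=> Hx Hg kF kK H; apply: Hx => a; apply: Hg. Qed.

Lemma cps_related_eqr A B (h : A -> B) x y y' :
  cps_related h x y -> y = y' -> cps_related h x y'.
Proof. by move=> ? <-. Qed.

Lemma cps_related_if A B (h : A -> B) c a b :
  cps_related h (cpsif c a b) (cpsif (mf c) (h a) (h b)).
Proof. by move=> kF kK H; rewrite /cpsif /GRing.If /= !H. Qed.

Lemma sizeT_map p : cps_related id (sizeT p) (sizeT (mp p)).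
Proof.
elim: p => [|c p IH] /=; first exact: cps_related_ret.
apply: cps_related_bind IH _ => -[|k] /=; last exact: cps_related_ret.
exact: (@cps_related_if _ _ id (GRing.Equal c (GRing.NatConst _ 0%N)) 0%N 1%N).
Qed.

Lemma isnull_map p : cps_related id (isnull p) (isnull (mp p)).
Proof. by apply: cps_related_bind (sizeT_map p) _ => k; apply: cps_related_ret. Qed.

Lemma lt_sizeT_map p q : cps_related id (lt_sizeT p q) (lt_sizeT (mp p) (mp q)).
Proof.
apply: cps_related_bind (sizeT_map p) _ => k.
by apply: cps_related_bind (sizeT_map q) _ => l; apply: cps_related_ret.
Qed.

Lemma lead_coefT_map p : cps_related mt (lead_coefT p) (lead_coefT (mp p)).
Proof.
elim: p => [|c p IH] /=; first exact: cps_related_ret.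
by apply: cps_related_bind IH _ => l; apply: cps_related_if.
Qed.

Lemma amulXnT_map a k : mp (amulXnT a k) = amulXnT (mt a) k.
Proof. by elim: k => //= k ->. Qed.

Lemma sumpT_map p q : mp (sumpT p q) = sumpT (mp p) (mp q).
Proof. by elim: p q => [|a p IH] [|b q] //=; rewrite IH. Qed.

Lemma mulpT_map p q : mp (mulpT p q) = mulpT (mp p) (mp q).
Proof.
elim: p => [|a p IH] //=; rewrite sumpT_map /= IH; congr sumpT.
by rewrite /map_polyF -!map_comp.
Qed.

Lemma opppT_map p : mp (opppT p) = opppT (mp p).
Proof. by rewrite /map_polyF /opppT -!map_comp. Qed.

Lemma natmulpT_map k p : mp (natmulpT k p) = natmulpT k (mp p).
Proof. by rewrite /map_polyF /natmulpT -!map_comp. Qed.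

(* results (scaling exponent, quotient, remainder) of a pseudo-division *)
Definition map_divres (x : nat * polyF F * polyF F) : nat * polyF K * polyF K :=
  (x.1.1, mp x.1.2, mp x.2).

Lemma redivp_rec_loopT_map q sq cq c qq r k :
  cps_related map_divres (redivp_rec_loopT q sq cq c qq r k)
    (redivp_rec_loopT (mp q) sq (mt cq) c (mp qq) (mp r) k).
Proof.
elim: k c qq r => [|k IH] c qq r /=;
  apply: cps_related_bind (sizeT_map r) _ => sr /=;
  (case: ifP => _; first exact: (@cps_related_ret _ _ map_divres (c, qq, r)));
  apply: cps_related_bind (lead_coefT_map r) _ => lr.
  apply: cps_related_ret.
  by rewrite /map_divres /= !sumpT_map !mulpT_map opppT_map mulpT_map amulXnT_map.
apply: cps_related_eqr; first exact: IH.
by rewrite /= !sumpT_map !mulpT_map opppT_map mulpT_map amulXnT_map.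
Qed.

Lemma redivpT_map p q :
  cps_related map_divres (redivpT p q) (redivpT (mp p) (mp q)).
Proof.
apply: cps_related_bind (isnull_map q) _ => -[] /=.
  exact: (@cps_related_ret _ _ map_divres (0%N, [:: GRing.NatConst _ 0%N], p)).
apply: cps_related_bind (sizeT_map q) _ => sq.
apply: cps_related_bind (sizeT_map p) _ => sp.
apply: cps_related_bind (lead_coefT_map q) _ => lq.
exact: (@redivp_rec_loopT_map q sq lq 0%N [:: GRing.NatConst _ 0%N] p sp).
Qed.

Lemma rmodpT_map p q : cps_related mp (rmodpT p q) (rmodpT (mp p) (mp q)).
Proof. by apply: cps_related_bind (redivpT_map p q) _ => x; apply: cps_related_ret. Qed.

Lemma rdivpT_map p q : cps_related mp (rdivpT p q) (rdivpT (mp p) (mp q)).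
Proof. by apply: cps_related_bind (redivpT_map p q) _ => x; apply: cps_related_ret. Qed.

Lemma rgcdp_loopT_map k pp qq :
  cps_related mp (rgcdp_loopT k pp qq) (rgcdp_loopT k (mp pp) (mp qq)).
Proof.
elim: k pp qq => [|k IH] pp qq /=;
  apply: cps_related_bind (rmodpT_map pp qq) _ => rr;
  apply: cps_related_bind (isnull_map rr) _ => -[]; try exact: cps_related_ret.
exact: IH.
Qed.

Lemma rgcdpT_map p q : cps_related mp (rgcdpT p q) (rgcdpT (mp p) (mp q)).
Proof.
apply: cps_related_bind (lt_sizeT_map p q) _ => -[] /=.
  apply: cps_related_bind (isnull_map q) _ => -[]; first exact: cps_related_ret.
  by apply: cps_related_bind (sizeT_map q) _ => k; apply: rgcdp_loopT_map.
apply: cps_related_bind (isnull_map p) _ => -[]; first exact: cps_related_ret.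
by apply: cps_related_bind (sizeT_map p) _ => k; apply: rgcdp_loopT_map.
Qed.

Lemma rgcdpTs_map ps : cps_related mp (rgcdpTs ps) (rgcdpTs (map mp ps)).
Proof.
elim: ps => [|p ps IH] /=; first exact: (@cps_related_ret _ _ mp [:: GRing.NatConst _ 0%N]).
by apply: cps_related_bind IH _ => pr; apply: rgcdpT_map.
Qed.

Lemma rgdcop_recT_map k q p :
  cps_related mp (rgdcop_recT k q p) (rgdcop_recT k (mp q) (mp p)).
Proof.
elim: k q p => [|k IH] q p /=.
  apply: cps_related_bind (isnull_map q) _ => b.
  exact: (@cps_related_ret _ _ mp [:: GRing.NatConst _ b]).
apply: cps_related_bind (rgcdpT_map p q) _ => g.
apply: cps_related_bind (sizeT_map g) _ => sg /=.
case: ifP => _; first exact: cps_related_ret.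
by apply: cps_related_bind (rdivpT_map p g) _ => r'; apply: IH.
Qed.

Lemma rgdcopT_map q p : cps_related mp (rgdcopT q p) (rgdcopT (mp q) (mp p)).
Proof. by apply: cps_related_bind (sizeT_map p) _ => sp; apply: rgdcop_recT_map. Qed.

Lemma ex_elim_seq_map ps q :
  mf (ex_elim_seq ps q) = ex_elim_seq (map mp ps) (mp q).
Proof.
symmetry; apply: (cps_related_bind (rgcdpTs_map ps)) => [g|]; last by [].
apply: cps_related_bind (rgdcopT_map q g) _ => d'.
by apply: cps_related_bind (sizeT_map d') _ => k; apply: cps_related_ret.
Qed.

Lemma abstrX_map i t : mp (abstrX i t) = abstrX i (mt t).
Proof.
elim: t => //=.
- by move=> j; case: eqP.
- by move=> t1 IH1 t2 IH2; rewrite sumpT_map IH1 IH2.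
- by move=> t1 IH1; rewrite opppT_map IH1.
- by move=> t1 IH1 k; rewrite natmulpT_map IH1.
- by move=> t1 IH1 t2 IH2; rewrite mulpT_map IH1 IH2.
- by move=> t1 IH1 k; elim: k => //= k IHk; rewrite mulpT_map IH1 IHk.
Qed.

Lemma ex_elim_map x ps qs :
  mf (ex_elim x (ps, qs)) = ex_elim x (mp ps, mp qs).
Proof.
rewrite /ex_elim /= ex_elim_seq_map abstrX_map -map_comp.
congr (ex_elim_seq _ (abstrX _ _)).
  by rewrite /map_polyF -map_comp; apply: eq_map => t /=; apply: abstrX_map.
rewrite /map_polyF (@big_morph _ _ mt (GRing.NatConst _ 1%N) GRing.Mul
   (GRing.NatConst _ 1%N) GRing.Mul (fun _ _ => erefl) erefl).
by rewrite big_map.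
Qed.

(* a disjunct of a disjunctive normal form: equations and disequations *)
Definition map_dnf_clause (bc : seq (GRing.term F) * seq (GRing.term F)) :=
  (mp bc.1, mp bc.2).

Lemma and_dnf_map a b : map map_dnf_clause (GRing.and_dnf a b) =
  GRing.and_dnf (map map_dnf_clause a) (map map_dnf_clause b).
Proof.
elim: a => [|x a IH]; first by rewrite /GRing.and_dnf !big_nil.
rewrite /GRing.and_dnf /= !big_cons -/(GRing.and_dnf a b) -/(GRing.and_dnf _ _).
rewrite map_cat IH -!map_comp; congr (_ ++ _).
by apply: eq_map => y /=; rewrite /map_dnf_clause /map_polyF /= !map_cat.
Qed.

Lemma qf_to_dnf_map g b :
  map map_dnf_clause (GRing.qf_to_dnf g b) = GRing.qf_to_dnf (mf g) b.
Proof.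
elim: g b => /= [c b|t1 t2 []|t []|g1 IH1 g2 IH2 []|g1 IH1 g2 IH2 []|
                 g1 IH1 g2 IH2 []|g1 IH1 b|i g1 IH1 []|i g1 IH1 []] //=;
  by rewrite ?map_cat ?and_dnf_map ?IH1 ?IH2 //; case: (c (+) b).
Qed.

Lemma foldr_or_map l : mf (foldr GRing.Or (GRing.Bool false) l) =
  foldr GRing.Or (GRing.Bool false) (map mf l).
Proof. by elim: l => //= x l ->. Qed.

Lemma qe_map_form g : mf (GRing.quantifier_elim (@ex_elim F) g) =
  GRing.quantifier_elim (@ex_elim K) (mf g).
Proof.
elim: g => //= [g1 -> g2 ->|g1 -> g2 ->|g1 -> g2 ->|g1 ->|i g1 IH|i g1 IH] //.
  rewrite foldr_or_map -map_comp -IH -qf_to_dnf_map -map_comp.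
  by congr foldr; apply: eq_map => -[ps qs] /=; rewrite ex_elim_map.
rewrite foldr_or_map -map_comp -IH -qf_to_dnf_map -map_comp.
by congr (GRing.Not (foldr _ _ _)); apply: eq_map => -[ps qs] /=; rewrite ex_elim_map.
Qed.

End NaturalQE.

Section MapFormulaMorphism.
Variables (F K : fieldType) (iota : {rmorphism F -> K}).
Local Notation mt := (map_term iota).
Local Notation mf := (map_form iota).

Lemma eval_map_term e t : GRing.eval (map iota e) (mt t) = iota (GRing.eval e t).
Proof.
elim: t => /= [i|x|k|t1 -> t2 ->|t1 ->|t1 -> k|t1 -> t2 ->|t1 ->|t1 -> k].
- by elim: e i => [|x e IH] [|i] //=; rewrite rmorph0.
- by [].
- by rewrite rmorph_nat.
- by rewrite rmorphD.
- by rewrite rmorphN.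
- by rewrite rmorphMn.
- by rewrite rmorphM.
- by rewrite fmorphV.
- by rewrite rmorphXn.
Qed.

Lemma qf_eval_map_form e g : GRing.qf_eval (map iota e) (mf g) = GRing.qf_eval e g.
Proof.
elim: g => //= [t1 t2|t|g1 -> g2 ->|g1 -> g2 ->|g1 -> g2 ->|g1 ->] //.
  by rewrite !eval_map_term (inj_eq (fmorph_inj iota)).
by rewrite eval_map_term !unitfE fmorph_eq0.
Qed.

End MapFormulaMorphism.

Lemma rformula_map_form (R S : unitRingType) (f : R -> S) g :
  GRing.rformula (map_form f g) = GRing.rformula g.
Proof.
have rterm_map t : GRing.rterm (map_term f t) = GRing.rterm t.
  by elim: t => //= t1 -> t2 ->.
by elim: g => //= [t1 t2|g1 -> g2 ->|g1 -> g2 ->|g1 -> g2 ->]; rewrite ?rterm_map.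
Qed.

Lemma closed_qeP (F : closedFieldType) e g : GRing.rformula g ->
  GRing.holds e g <-> GRing.qf_eval e (GRing.quantifier_elim (@ClosedFieldQE.ex_elim F) g).
Proof.
move=> rg; apply: rwP; apply: GRing.quantifier_elim_rformP rg.
  exact: ClosedFieldQE.wf_ex_elim.
exact: ClosedFieldQE.holds_ex_elim (@solve_monicpoly F).
Qed.

Section Transfer.
Variables (F K : closedFieldType) (iota : {rmorphism F -> K}).

Lemma holds_map_formE e g : GRing.rformula g ->
  GRing.holds e (map_form iota g) <->
  GRing.qf_eval e (map_form iota (GRing.quantifier_elim (@ClosedFieldQE.ex_elim F) g)).
Proof.
by move=> rg; rewrite qe_map_form; apply: closed_qeP; rewrite rformula_map_form.
Qed.

Lemma transfer e g : GRing.rformula g ->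
  GRing.holds e g <-> GRing.holds (map iota e) (map_form iota g).
Proof.
by move=> rg; rewrite (closed_qeP e rg) (holds_map_formE _ rg) qf_eval_map_form.
Qed.

End Transfer.

Section TermPolynomial.
Variables (F : fieldType) (n : nat).

(* the polynomial computed by an inversion-free term (other variables are 0) *)
Fixpoint term_mpoly (t : GRing.term F) : {mpoly F[n]} :=
  match t with
  | GRing.Var i => if insub i is Some j then 'X_j else 0
  | GRing.Const x => x%:MP
  | GRing.NatConst k => k%:R
  | GRing.Add a b => term_mpoly a + term_mpoly b
  | GRing.Opp a => - term_mpoly a
  | GRing.NatMul a k => term_mpoly a *+ k
  | GRing.Mul a b => term_mpoly a * term_mpoly b
  | GRing.Inv a => 0
  | GRing.Exp a k => term_mpoly a ^+ k
  end.

Lemma eval_term_mpoly (A : fieldType) (g : {rmorphism F -> A}) (es : seq A) t :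
  size es = n -> GRing.rterm t ->
  GRing.eval es (map_term g t) = mmap g (fun i : 'I_n => nth 0 es i) (term_mpoly t).
Proof.
move=> Hs; elim: t => /=
  [i|x|k|t1 IH1 t2 IH2|t1 IH1|t1 IH1 k|t1 IH1 t2 IH2|//|t1 IH1 k] /=.
- move=> _; case: insubP => [j _ <-|]; first by rewrite mmapX mmap1U.
  by rewrite -Hs -leqNgt => Hi; rewrite nth_default ?mmap0.
- by rewrite mmapC.
- by rewrite rmorph_nat.
- by case/andP=> /IH1 -> /IH2 ->; rewrite rmorphD.
- by move/IH1 ->; rewrite rmorphN.
- by move/IH1 ->; rewrite rmorphMn.
- by case/andP=> /IH1 -> /IH2 ->; rewrite rmorphM.
- by move/IH1 ->; rewrite rmorphXn.
Qed.

Definition multinom_of D (e : {ffun 'I_n -> 'I_D.+1}) : 'X_{1..n} :=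
  [multinom (e i : nat) | i < n].

Definition mpoly_coefs (p : {mpoly F[n]}) : mpoly F n (msize p) :=
  [ffun e => p@_(multinom_of e)].

Lemma meval_mpoly_coefs (A : fieldType) (g : {rmorphism F -> A}) (w : 'I_n -> A) p :
  meval g (mpoly_coefs p) w = mmap g w p.
Proof.
set D := msize p; pose G (m : 'X_{1..n}) := g p@_m * mmap1 w m.
have -> : meval g (mpoly_coefs p) w = \sum_(e : {ffun 'I_n -> 'I_D.+1}) G (multinom_of e).
  apply: eq_bigr => e _; rewrite ffunE /G /mmap1; congr (_ * _).
  by apply: eq_bigr => i _; rewrite /multinom_of mnmE.
(* a monomial of the support has a unique bounded exponent vector *)
pose e0 (m : 'X_{1..n}) : {ffun 'I_n -> 'I_D.+1} := [ffun i => inord (m i)].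
have multinom_ofK m : m \in msupp p ->
    forall e : {ffun 'I_n -> 'I_D.+1}, (multinom_of e == m) = (e == e0 m).
  move=> Hm e; have lt_mD i : (m i < D.+1)%N.
    rewrite ltnS; apply: leq_trans (ltnW (msize_mdeg_lt Hm)).
    by rewrite mdegE (bigD1 i) //= leq_addr.
  apply/eqP/eqP => [<-|->].
    by apply/ffunP => i; apply: val_inj; rewrite ffunE /= /multinom_of mnmE inordK.
  by apply/mnmP => i; rewrite /multinom_of mnmE ffunE inordK.
transitivity (\sum_(m <- msupp p) \sum_(e : {ffun 'I_n -> 'I_D.+1})
    (if multinom_of e == m then G m else 0)); last first.
  apply: eq_big_seq => m Hm; rewrite -big_mkcond /=.
  by rewrite (eq_bigl (fun e => e == e0 m)) ?big_pred1_eq // => e; rewrite multinom_ofK.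
rewrite exchange_big /=; apply: eq_bigr => e _.
case Hin: (multinom_of e \in msupp p).
  rewrite (bigD1_seq (multinom_of e)) ?msupp_uniq //= eqxx big1_seq ?addr0 //.
  by move=> m /andP[Hne _]; rewrite eq_sym (negbTE Hne).
rewrite big1_seq => [|m /= Hm]; last by case: eqP => // He; rewrite He Hm in Hin.
by rewrite /G; move/negbT: Hin; rewrite -mcoeff_eq0 => /eqP ->; rewrite rmorph0 mul0r.
Qed.

End TermPolynomial.

Definition point_env (A : nzRingType) n (z : 'I_n -> A) : seq A := map z (enum 'I_n).

Lemma size_point_env (A : nzRingType) n (z : 'I_n -> A) : size (point_env z) = n.
Proof. by rewrite size_map size_enum_ord. Qed.

Lemma nth_point_env (A : nzRingType) n (z : 'I_n -> A) (i : 'I_n) :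
  nth 0 (point_env z) i = z i.
Proof. by rewrite (nth_map i) ?size_enum_ord // nth_ord_enum. Qed.

Lemma meval_ext (F A : comNzRingType) (g : F -> A) k D (c : mpoly F k D) (w1 w2 : 'I_k -> A) :
  w1 =1 w2 -> meval g c w1 = meval g c w2.
Proof. by move=> Hw; apply: eq_bigr => e _; congr (_ * _); apply: eq_bigr => i _; rewrite Hw. Qed.

Lemma point_env_nth (A : nzRingType) n (xs : seq A) :
  size xs = n -> point_env (fun i : 'I_n => nth 0 xs i) = xs.
Proof.
move=> Hxs; apply: (@eq_from_nth _ 0); rewrite size_point_env // => i Hi.
by rewrite (nth_point_env _ (Ordinal Hi)).
Qed.

Lemma alg_indep_eval_eq0 (F K : fieldType) (iota : {rmorphism F -> K}) n (z : 'I_n -> K) :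
  alg_indep iota z -> forall t, GRing.rterm t ->
  GRing.eval (point_env z) (map_term iota t) = 0 ->
  forall xs : seq F, size xs = n -> GRing.eval xs t = 0.
Proof.
move=> z_indep t rt tz0 xs Hxs.
rewrite (eval_term_mpoly _ (size_point_env z) rt) -meval_mpoly_coefs in tz0.
rewrite (meval_ext _ _ (nth_point_env z)) in tz0.
rewrite -(map_term_id t) (eval_term_mpoly idfun Hxs rt) -meval_mpoly_coefs.
by rewrite (z_indep _ _ tz0) /meval big1 // => e _; rewrite ffunE mul0r.
Qed.

Section FormulaBlocks.

Fixpoint exists_block (R : Type) (k s : nat) (g : GRing.formula R) : GRing.formula R :=
  if s is s'.+1 then GRing.Exists k (exists_block k.+1 s' g) else g.

Lemma map_form_exists_block (R S : Type) (f : R -> S) k s g :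
  map_form f (exists_block k s g) = exists_block k s (map_form f g).
Proof. by elim: s k => //= s IH k; rewrite IH. Qed.

Lemma rformula_exists_block (R : unitRingType) k s (g : GRing.formula R) :
  GRing.rformula (exists_block k s g) = GRing.rformula g.
Proof. by elim: s k => //= s IH k; rewrite IH. Qed.

Lemma holds_exists_block (R : unitRingType) s k (e : seq R) g : size e = k ->
  GRing.holds e (exists_block k s g) <->
  exists2 ys, size ys = s & GRing.holds (e ++ ys) g.
Proof.
have set_nth_size (v : R) (e' : seq R) : set_nth 0 e' (size e') v = rcons e' v.
  by elim: e' => //= x e' ->.
elim: s k e => [|s IH] k e He /=.
  split=> [h|[ys /size0nil -> h]]; last by rewrite cats0 in h.
  by exists [::]; rewrite ?cats0.
split=> [[v]|[[|v ys] //= [Hys] h]].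
  rewrite -He set_nth_size => /(IH _ _ (size_rcons e v)) [ys Hys h].
  by exists (v :: ys); rewrite /= ?Hys -?cat_rcons.
exists v; rewrite -He set_nth_size; apply/(IH _ _ (size_rcons e v)).
by exists ys; rewrite ?cat_rcons.
Qed.

Definition conj_form (R : Type) (I : Type) (P : I -> GRing.formula R) (s : seq I) :=
  foldr (fun i g => GRing.And (P i) g) (GRing.Bool true) s.

Lemma holds_conj_form (R : unitRingType) (I : eqType) (P : I -> GRing.formula R) s e :
  GRing.holds e (conj_form P s) <-> (forall i, i \in s -> GRing.holds e (P i)).
Proof.
elim: s => [|x s IH] /=; first by split.
split=> [[h1 /IH h2] i|h]; first by rewrite inE => /predU1P[->|/h2].
split; first by apply: h; rewrite inE eqxx.
by apply/IH => i Hi; apply: h; rewrite inE Hi orbT.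
Qed.

Definition poly_term (F A : Type) (g : F -> A) k n D (c : mpoly F n D) : GRing.term A :=
  \big[GRing.Add/GRing.NatConst _ 0%N]_e
     GRing.Mul (GRing.Const (g (c e)))
       (\big[GRing.Mul/GRing.NatConst _ 1%N]_(j < n) GRing.Exp (GRing.Var _ (k + j)) (e j)).

Lemma map_poly_term (F A : Type) (g : F -> A) k n D (c : mpoly F n D) :
  map_term g (poly_term id k c) = poly_term g k c.
Proof.
rewrite /poly_term (@big_morph _ _ (map_term g) (GRing.NatConst _ 0%N) GRing.Add
   (GRing.NatConst _ 0%N) GRing.Add (fun _ _ => erefl) erefl).
apply: eq_bigr => e _ /=; congr GRing.Mul.
by rewrite (@big_morph _ _ (map_term g) (GRing.NatConst _ 1%N) GRing.Mul
   (GRing.NatConst _ 1%N) GRing.Mul (fun _ _ => erefl) erefl).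
Qed.

Lemma rterm_poly_term (F A : unitRingType) (g : F -> A) k n D (c : mpoly F n D) :
  GRing.rterm (poly_term g k c).
Proof.
apply: (big_ind (@GRing.rterm A)) => //= [x y -> ->|e _] //.
by apply: (big_ind (@GRing.rterm A)) => //= x y -> ->.
Qed.

Lemma eval_poly_term (F A : fieldType) (g : F -> A) k n D (c : mpoly F n D)
    (env : seq A) (w : 'I_n -> A) :
  (forall j : 'I_n, nth 0 env (k + j) = w j) ->
  GRing.eval env (poly_term g k c) = meval g c w.
Proof.
move=> Hw; rewrite /poly_term /meval.
rewrite (@big_morph _ _ (GRing.eval env) 0 +%R (GRing.NatConst _ 0%N) GRing.Add
   (fun _ _ => erefl) erefl).
apply: eq_bigr => e _ /=; congr (_ * _).
rewrite (@big_morph _ _ (GRing.eval env) 1 *%R (GRing.NatConst _ 1%N) GRing.Mul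
   (fun _ _ => erefl) erefl).
by apply: eq_bigr => j _ /=; rewrite Hw.
Qed.

Definition prod_term (R : Type) (S : seq (GRing.term R)) : GRing.term R :=
  foldr GRing.Mul (GRing.NatConst _ 1%N) S.

Lemma eval_prod_term (R : comUnitRingType) e (S : seq (GRing.term R)) :
  GRing.eval e (prod_term S) = \prod_(t <- S) GRing.eval e t.
Proof. by elim: S => [|t S IH]; rewrite ?big_nil ?big_cons //= IH. Qed.

Lemma rterm_prod_term (R : unitRingType) (S : seq (GRing.term R)) :
  all (@GRing.rterm R) S -> GRing.rterm (prod_term S).
Proof. by elim: S => //= t S IH /andP[-> /IH]. Qed.

Lemma map_prod_term (R A : Type) (f : R -> A) (S : seq (GRing.term R)) :
  map_term f (prod_term S) = prod_term (map (map_term f) S).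
Proof. by elim: S => //= t S ->. Qed.

End FormulaBlocks.

(* The atoms of a quantifier-free formula: each equation t1 = t2 as t1 - t2,
   and the argument of each unit test; in a field the truth value of the
   formula only depends on which atoms vanish. *)
Fixpoint atoms (R : Type) (g : GRing.formula R) : seq (GRing.term R) :=
  match g with
  | GRing.Equal t1 t2 => [:: GRing.Add t1 (GRing.Opp t2)]
  | GRing.Unit t => [:: t]
  | GRing.And a b | GRing.Or a b | GRing.Implies a b => atoms a ++ atoms b
  | GRing.Not a => atoms a
  | _ => [::]
  end.

Lemma qf_eval_atoms (F K : fieldType) (iota : F -> K) (xs : seq F) (zs : seq K) g :
  all (fun t => (GRing.eval xs t == 0) == (GRing.eval zs (map_term iota t) == 0))
    (atoms g) ->
  GRing.qf_eval xs g = GRing.qf_eval zs (map_form iota g).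
Proof.
elim: g => //= [t1 t2|t|a IHa b IHb|a IHa b IHb|a IHa b IHb|a IHa]; rewrite ?all_cat.
- by rewrite andbT => /eqP; rewrite !subr_eq0.
- by rewrite andbT !unitfE => /eqP ->.
- by case/andP=> /IHa -> /IHb ->.
- by case/andP=> /IHa -> /IHb ->.
- by case/andP=> /IHa -> /IHb ->.
- by move/IHa ->.
Qed.

Lemma rformula_atoms (R : unitRingType) (g : GRing.formula R) :
  GRing.rformula g -> all (@GRing.rterm R) (atoms g).
Proof.
elim: g => //= [t1 t2|a IHa b IHb|a IHa b IHb|a IHa b IHb];
  first by case/andP=> -> ->.
all: by case/andP=> /IHa Ha /IHb Hb; rewrite all_cat Ha Hb.
Qed.

Section GenericPoint.
Variables (F K : closedFieldType) (iota : {rmorphism F -> K}) (n : nat) (z : 'I_n -> K).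
Hypothesis z_indep : alg_indep iota z.
Local Notation zs := (point_env z).

(* Some point of F^n makes the same atoms of psi vanish as z: the sentence
   "the atoms not vanishing at z have a common nonzero" holds in K (at z), hence
   in F; the atoms vanishing at z vanish everywhere by algebraic independence. *)
Lemma generic_specialization psi : GRing.rformula psi ->
  exists2 xs : seq F, size xs = n &
    GRing.qf_eval xs psi = GRing.qf_eval zs (map_form iota psi).
Proof.
move=> rpsi; have ratoms := rformula_atoms rpsi.
pose S := filter (fun t => GRing.eval zs (map_term iota t) != 0) (atoms psi).
pose chi := exists_block 0 n (GRing.Not (GRing.Equal (prod_term S) (GRing.NatConst _ 0%N))).
have rchi : GRing.rformula chi.
  rewrite rformula_exists_block /= andbT; apply: rterm_prod_term.
  by rewrite /S all_filter; apply: sub_all ratoms => t /= ->; rewrite implybT.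
have : GRing.holds [::] chi.
  apply/(transfer iota [::] rchi); rewrite map_form_exists_block.
  apply/(holds_exists_block (e := [::]) _ _ erefl); exists zs; first exact: size_point_env.
  rewrite /= map_prod_term eval_prod_term big_map; apply/eqP.
  rewrite prodf_seq_neq0 all_filter.
  by elim: (atoms psi) => //= t s ->; rewrite implybb.
case/(holds_exists_block (e := [::]) _ _ erefl) => xs Hxs /= /eqP.
rewrite /S eval_prod_term prodf_seq_neq0 all_filter => nz_xs.
exists xs => //; apply: qf_eval_atoms.
elim: (atoms psi) ratoms nz_xs => //= t s IH /andP[rt rs] /andP[nz_t nz_s].
rewrite IH // andbT.
have [tz0|tz_neq0] := eqVneq (GRing.eval zs (map_term iota t)) 0.
  by rewrite (alg_indep_eval_eq0 z_indep rt tz0 Hxs) eqxx.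
by rewrite (negbTE (implyP nz_t tz_neq0)).
Qed.

Lemma generic_point phi : GRing.rformula phi ->
  (forall x : 'I_n -> F, GRing.holds (point_env x) phi) ->
  GRing.holds zs (map_form iota phi).
Proof.
move=> rphi valid; apply/(holds_map_formE _ _ rphi).
have /andP[_ rpsi] := GRing.quantifier_elim_wf (@ClosedFieldQE.wf_ex_elim F) rphi.
have [xs Hxs <-] := generic_specialization rpsi.
by apply/(closed_qeP _ rphi); rewrite -(point_env_nth Hxs); apply: valid.
Qed.

End GenericPoint.

Section ImageFormula.
Variables (F : fieldType) (n m r DM DL : nat).
Variables (M : 'I_m -> mpoly F r DM) (L : 'I_m -> mpoly F n DL).

Definition image_formula (A : Type) (g : F -> A) : GRing.formula A :=
  exists_block n r (conj_form
    (fun i => GRing.Equal (poly_term g n (M i)) (poly_term g 0 (L i))) (enum 'I_m)).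

Lemma map_image_formula (A : Type) (g : F -> A) :
  map_form g (image_formula id) = image_formula g.
Proof.
rewrite map_form_exists_block; congr exists_block.
by rewrite /conj_form; elim: (enum 'I_m) => //= i s ->; rewrite !map_poly_term.
Qed.

Lemma rformula_image_formula : GRing.rformula (image_formula id).
Proof.
by rewrite rformula_exists_block; elim: (enum 'I_m) => //= i s ->; rewrite !rterm_poly_term.
Qed.

Lemma holds_image_formula (A : fieldType) (g : F -> A) (w : 'I_n -> A) :
  GRing.holds (point_env w) (image_formula g) <->
  exists y : 'I_r -> A, forall i, meval g (M i) y = meval g (L i) w.
Proof.
have holds_eq (ys : seq A) i :
    GRing.holds (point_env w ++ ys) (GRing.Equal (poly_term g n (M i)) (poly_term g 0 (L i)))
    <-> meval g (M i) (fun j => nth 0 ys j) = meval g (L i) w.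
  rewrite /= (eval_poly_term _ _ (w := fun j => nth 0 ys j)) => [|j].
    rewrite (eval_poly_term _ _ (w := w)) // => j.
    by rewrite add0n nth_cat size_point_env ltn_ord nth_point_env.
  by rewrite nth_cat size_point_env ltnNge leq_addr /= addKn.
rewrite /image_formula (holds_exists_block _ _ (size_point_env w)).
split=> [[ys _ /holds_conj_form h]|[y hy]].
  by exists (fun j => nth 0 ys j) => i; apply/holds_eq/h; rewrite mem_enum.
exists (point_env y); first exact: size_point_env.
apply/holds_conj_form => i _; apply/holds_eq; rewrite -hy.
by apply: meval_ext => j; rewrite nth_point_env.
Qed.

End ImageFormula.

Theorem lemma9p3 (F : closedFieldType) (n m r d DL : nat)
  (L : 'I_m -> mpoly F n DL) :
  ~ elusive L r d ->
  forall (K : closedFieldType) (iota : {rmorphism F -> K}) (z : 'I_n -> K),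
    is_alg_closure_Fz iota z ->
    exists p : 'I_r -> K, forall i : 'I_m, dspan iota d p (meval iota (L i) z).
Proof.
move=> not_elusive K iota z [z_indep _].
have [M M_deg im_LM] : exists2 M : 'I_m -> mpoly F r d,
    forall i, deg_le (M i) d & im_sub L M.
  by apply: NNPP => noM; apply: not_elusive => M M_deg im_LM; apply: noM; exists M.
(* every point of F^n is in the image of M, hence so is the generic point *)
have valid (x : 'I_n -> F) : GRing.holds (point_env x) (image_formula M L id).
  by apply/holds_image_formula; apply: im_LM.
have [p Hp] : exists p : 'I_r -> K, forall i, meval iota (M i) p = meval iota (L i) z.
  apply/holds_image_formula; rewrite -map_image_formula.
  exact: generic_point z_indep _ (rformula_image_formula M L) valid.
by exists p => i; exists (M i); split; rewrite ?Hp.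
Qed.
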